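(* Let $S=S'\wedge C$ be a scheduling problem on $n$ elements where $C$ is a contractible clause, let $V(C)=O_1\uplus\cdots\uplus O_k$ be the decomposition into $\sim_C$ equivalence classes ordered so that $O_i>O_j$ for $i<j$, and let $r_i=|O_i|-1$. Then $$\mathcal{S}_S=\mathcal{S}_{S'}-\left(\mathcal{S}_{S'\downarrow_{(r_1,\dots,r_k)}}\right)\uparrow^{(r_1,\dots,r_k)}.$$
   Context: A scheduling problem on $n$ elements is a Boolean formula over atoms $(x_i\le x_j)$, $i,j\in[n]$, with $(x_i=x_j)=(x_i\le x_j)\wedge(x_j\le x_i)$ and $(x_i\ne x_j)=\neg(x_i=x_j)$. A solution is $f:[n]\to\mathbb{P}=\{1,2,\dots\}$ making it true with $x_i=f(i)$; $\mathcal{S}_S=\sum_f y_{f(1)}\cdots y_{f(n)}$ over solutions, in noncommuting variables $y_1,y_2,\dots$. A formula $C$ given as $C=\bigvee_{(i,j)\in I}(x_i\ne x_j)$ with $I\subseteq[n]\times[n]$ is edge-like; $V(C)$ is the set of indices $i$ with $x_i$ appearing in $C$, and $\sim_C$ is the equivalence relation on $V(C)$ generated by $i\sim j$ for $(i,j)\in I$. For disjoint sets, $A>B$ means $a>b$ for all $a\in A,b\in B$. $C$ is a contractible clause if it is edge-like, $V(C)=\{m,m+1,\dots,n\}$ for some $1\le m\le n$, and the $\sim_C$ classes can be ordered $O_1,\dots,O_k$ with $O_i>O_j$ for $i<j$. With $r=\sum_i r_i$, the contraction $S'\downarrow_{(r_1,\dots,r_k)}$ is the scheduling problem on $n-r$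 elements obtained from $S'$ by replacing each variable $x_j$ by $x_{\psi(j)}$, where $\psi(j)=j$ for $j<m$ and $\psi(j)=m+k-i$ for $j\in O_i$. Induction: for nonnegative integers $r_1,\dots,r_k$ and a monomial $y_{i_1}\cdots y_{i_p}$ with $k\le p$, $y_{i_1}\cdots y_{i_p}\uparrow^{(r_1,\dots,r_k)}=y_{i_1}\cdots y_{i_{p-k}}y_{i_{p-k+1}}^{1+r_k}\cdots y_{i_p}^{1+r_1}$, extended linearly (termwise). *)

From mathcomp Require Import all_boot all_order all_algebra.
From Stdlib Require Import Relation_Operators.
Set Implicit Arguments. Unset Strict Implicit. Unset Printing Implicit Defensive.
Import GRing.Theory.

(* Boolean formulas over atoms (x_i <= x_j); indices are 1-based naturals. *)
Inductive formula : Type :=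
  | FBot : formula
  | FAtom : nat -> nat -> formula
  | FNeg : formula -> formula
  | FAnd : formula -> formula -> formula
  | FOr  : formula -> formula -> formula.

Fixpoint feval (x : nat -> nat) (F : formula) : bool :=
  match F with
  | FBot => false
  | FAtom i j => x i <= x j
  | FNeg G => ~~ feval x G
  | FAnd G H => feval x G && feval x H
  | FOr G H => feval x G || feval x H
  end.

Fixpoint on_elems (n : nat) (F : formula) : bool :=
  match F with
  | FBot => true
  | FAtom i j => (0 < i <= n) && (0 < j <= n)
  | FNeg G => on_elems n G
  | FAnd G H => on_elems n G && on_elems n H
  | FOr G H => on_elems n G && on_elems n H
  end.

Fixpoint frename (psi : nat -> nat) (F : formula) : formula :=
  match F with
  | FBot => FBot
  | FAtom i j => FAtom (psi i) (psi j)
  | FNeg G => FNeg (frename psi G)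
  | FAnd G H => FAnd (frename psi G) (frename psi H)
  | FOr G H => FOr (frename psi G) (frename psi H)
  end.

Definition Feq i j := FAnd (FAtom i j) (FAtom j i).
Definition Fneq i j := FNeg (Feq i j).

Definition edge_clause (I : seq (nat * nat)) : formula :=
  foldr (fun e acc => FOr (Fneq e.1 e.2) acc) FBot I.

Definition VC (I : seq (nat * nat)) : seq nat :=
  undup (flatten [seq [:: e.1; e.2] | e <- I]).

Definition simC (I : seq (nat * nat)) (i j : nat) : Prop :=
  i \in VC I /\ j \in VC I /\
  clos_refl_sym_trans nat (fun a b => (a, b) \in I) i j.

Definition ordered_class_decomp (I : seq (nat * nat)) (Os : seq (seq nat)) : Prop :=
  (forall O, O \in Os -> uniq O /\ exists x, x \in O /\
      forall y, y \in O <-> simC I x y) /\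
  (forall v, v \in VC I -> exists2 O, O \in Os & v \in O) /\
  (forall O, O \in Os -> forall v, v \in O -> v \in VC I) /\
  (forall a b, a < b < size Os ->
     forall x y, x \in nth [::] Os a -> y \in nth [::] Os b -> y < x).

(* C contractible: V(C) = {m,...,n}, 1 <= m <= n *)
Definition VC_interval (I : seq (nat * nat)) (m n : nat) : Prop :=
  0 < m <= n /\ forall i, i \in VC I = (m <= i <= n).

(* psi(j) = j for j < m, psi(j) = m + k - i for j in O_i (1-based i) *)
Definition psi (m : nat) (Os : seq (seq nat)) (j : nat) : nat :=
  if j < m then j else m + size Os - (find (fun O => j \in O) Os).+1.

Definition contraction (S' : formula) (m : nat) (Os : seq (seq nat)) : formula :=
  frename (psi m Os) S'.

(* Formal series in noncommuting variables y_1, y_2, ... with integer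
   coefficients: a word y_{a_1}...y_{a_p} is the sequence [:: a_1; ...; a_p]. *)
Definition series := seq nat -> int.

(* S_S : coefficient of the word u is the number of solutions f with
   (f 1, ..., f n) = u, i.e. 1 if u has length n, positive letters and
   x_i := u_i satisfies S, and 0 otherwise. *)
Definition Sgen (n : nat) (S : formula) : series :=
  fun u => let b : bool := (size u == n) && all (fun a => 0 < a) u
                          && feval (fun i => nth 0 u i.-1) S in
            ((b : nat)%:R)%R.

Definition up_word (rs : seq nat) (w : seq nat) : seq nat :=
  let p := size w in let k := size rs in
  take (p - k) w ++
  flatten [seq nseq x.2.+1 x.1 | x <- zip (drop (p - k) w) (rev rs)].

Fixpoint all_words (s : seq nat) (p : nat) : seq (seq nat) :=
  match p with
  | 0 => [:: [::]]
  | p'.+1 => [seq a :: w | a <- s, w <- all_words s p']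
  end.

(* every w with up_word rs w = u has length <= size u and letters in u *)
Definition candidates (u : seq nat) : seq (seq nat) :=
  flatten [seq all_words (undup u) p | p <- iota 0 (size u).+1].

(* linear (termwise) extension of induction to series (all of whose
   monomials have length >= k) *)
Definition induce (rs : seq nat) (F : series) : series :=
  fun u => (\sum_(w <- candidates u | ((size rs <= size w)%N && (up_word rs w == u)))
              F w)%R.

Definition rvec (Os : seq (seq nat)) : seq nat := map (fun O => (size O).-1) Os.

(** The map [psi] sends {1..n} onto {1..p}, p = m-1+k, fixing the points
    below m and collapsing the class O_i to the point m+k-i.  Because the
    ~_C classes are consecutive intervals O_k < ... < O_1 filling {m..n},
    inducing a word w of length p by (r_1,...,r_k) is the same as pulling it
    back along [psi], i.e. reading off the assignment x_j := w_(psi j).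
    Pullback along a surjection is injective, and its image is the set of
    words constant on the fibres of [psi], i.e. on the ~_C classes: exactly
    the words violating C.  As the solutions of the contraction of S' pull
    back to the solutions of S', the induced series is the series of
    S' /\ ~C, and S_(S' /\ C) = S_S' - S_(S' /\ ~C). *)

From mathcomp Require Import all_boot all_order all_algebra zify.
From Stdlib Require Import Relation_Operators.

Set Implicit Arguments.
Unset Strict Implicit.
Unset Printing Implicit Defensive.

Import GRing.Theory.

(** * Words as assignments *)

(* Indices are 1-based: [word_val u i] is u_i, and [word_val u 0] is junk. *)
Definition word_val (u : seq nat) (i : nat) : nat := nth 0 u i.-1.

Lemma SgenE n F u : Sgen n F u =
  ((size u == n) && all (fun a => (0 < a)%N) u && feval (word_val u) F : nat)%:R%R.
Proof. by []. Qed.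

Lemma eq_from_word_val n u v : size u = n -> size v = n ->
  (forall j, 0 < j <= n -> word_val u j = word_val v j) -> u = v.
Proof.
move=> su sv E; apply: (@eq_from_nth _ 0) => [|i]; first by rewrite su sv.
by rewrite su => lt_in; apply: (E i.+1); lia.
Qed.

Lemma word_val_iota (g : nat -> nat) p i : 0 < i <= p ->
  word_val [seq g j | j <- iota 1 p] i = g i.
Proof.
move=> lt_ip; rewrite /word_val (nth_map 0) ?size_iota; last by lia.
by rewrite nth_iota; [congr g; lia | lia].
Qed.

Lemma word_val_rcons w a i : 0 < i <= size w ->
  word_val (rcons w a) i = word_val w i.
Proof. by move=> i_w; rewrite /word_val nth_rcons ifT //; lia. Qed.

Lemma word_val_rcons_last w a : word_val (rcons w a) (size w).+1 = a.
Proof. by rewrite /word_val nth_rcons ltnn eqxx. Qed.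

Lemma feval_frename x f F : feval x (frename f F) = feval (x \o f) F.
Proof. by elim: F => //= [G -> | G -> H -> | G -> H ->]. Qed.

Lemma eq_feval_on n F x y : on_elems n F ->
  (forall j, 0 < j <= n -> x j = y j) -> feval x F = feval y F.
Proof.
move=> + Exy; elim: F => //= [i j /andP[/Exy -> /Exy ->] // | G IH /IH -> //
  | G IG H IH /andP[/IG -> /IH ->] // | G IG H IH /andP[/IG -> /IH ->] //].
Qed.

Lemma feval_edge_clause x I :
  feval x (edge_clause I) = has (fun e => x e.1 != x e.2) I.
Proof. by elim: I => //= e I ->; rewrite /Fneq /Feq /= -eqn_leq. Qed.

Lemma Sgen_split n F G u :
  Sgen n (FAnd F G) u = (Sgen n F u - Sgen n (FAnd F (FNeg G)) u)%R.
Proof.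
rewrite !SgenE /=.
case: ((size u == n) && _) => //=.
by case: (feval _ F); case: (feval _ G); rewrite ?subr0 ?subrr.
Qed.

(** * Pulling words back along a surjection *)

Definition pullback (f : nat -> nat) (n : nat) (w : seq nat) : seq nat :=
  [seq word_val w (f j) | j <- iota 1 n].

Definition const_on_fibres (f : nat -> nat) (n : nat) (u : seq nat) : Prop :=
  forall a b, 0 < a <= n -> 0 < b <= n -> f a = f b ->
    word_val u a = word_val u b.

Lemma size_pullback f n w : size (pullback f n w) = n.
Proof. by rewrite size_map size_iota. Qed.

Lemma word_val_pullback f n w j : 0 < j <= n ->
  word_val (pullback f n w) j = word_val w (f j).
Proof. exact: (word_val_iota (word_val w \o f)). Qed.

Lemma pullback_const_on_fibres f n w : const_on_fibres f n (pullback f n w).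
Proof. by move=> a b an bn fab; rewrite !word_val_pullback // fab. Qed.

Section PullbackOnto.

Variables (n p : nat) (f : nat -> nat).
Hypothesis f_range : forall j, 0 < j <= n -> 0 < f j <= p.
Hypothesis f_onto : forall i, 0 < i <= p -> exists2 j, 0 < j <= n & f j = i.

Lemma pullback_inj w w' : size w = p -> size w' = p ->
  pullback f n w = pullback f n w' -> w = w'.
Proof.
move=> sw sw' E; apply: (eq_from_word_val sw sw') => i /f_onto[j jn <-].
by rewrite -(word_val_pullback f w jn) -(word_val_pullback f w' jn) E.
Qed.

Lemma mem_pullback w a : size w = p -> a \in w -> a \in pullback f n w.
Proof.
move=> sw /(nthP 0)[i]; rewrite sw => ip <-.
have /f_onto[j jn fj] : 0 < i.+1 <= p by lia.
rewrite -[nth _ _ _]/(word_val w i.+1) -fj -(word_val_pullback _ _ jn).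
by apply: mem_nth; rewrite size_pullback; lia.
Qed.

Lemma pullback_onto u : size u = n -> const_on_fibres f n u ->
  exists2 w, size w = p & pullback f n w = u.
Proof.
move=> su cu.
pose g i := nth 0 (iota 1 n) (find (fun j => f j == i) (iota 1 n)).
have gP i : 0 < i <= p -> 0 < g i <= n /\ f (g i) = i.
  move=> /f_onto[j jn fj].
  have has_i : has (fun j => f j == i) (iota 1 n).
    by apply/hasP; exists j; rewrite ?mem_iota ?fj //; lia.
  split; last exact/eqP/(nth_find 0 has_i).
  have : g i \in iota 1 n by apply: mem_nth; rewrite -has_find.
  by rewrite mem_iota; lia.
exists [seq word_val u (g i) | i <- iota 1 p]; first by rewrite size_map size_iota.
apply: (eq_from_word_val (size_pullback _ _ _) su) => j jn.
have [gn fg] := gP (f j) (f_range jn).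
by rewrite word_val_pullback // word_val_iota ?f_range //; apply: cu.
Qed.

Lemma Sgen_frename F w : on_elems n F -> size w = p ->
  Sgen p (frename f F) w = Sgen n F (pullback f n w).
Proof.
move=> Fn sw; rewrite !SgenE feval_frename size_pullback sw !eqxx /=.
rewrite (@eq_feval_on n F _ (word_val (pullback f n w)) Fn); last first.
  by move=> j jn; rewrite word_val_pullback.
congr ((_ && _ : nat)%:R)%R; apply/allP/allP => pos a.
  move=> /mapP[j]; rewrite mem_iota => jn ->; apply/pos/mem_nth; rewrite sw.
  have /f_range : 0 < j <= n by lia.
  lia.
by move/(mem_pullback sw); apply: pos.
Qed.

End PullbackOnto.

(** * Induction of monomials *)

Lemma mem_all_words (s : seq nat) p w :
  (w \in all_words s p) = (size w == p) && all (mem s) w.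
Proof.
elim: p w => [|p IH] [|a w] //=; first by apply/allpairsP => -[[b v] [_ _]].
rewrite eqSS; apply/allpairsP/idP => [[[b v] /= [bs] + [-> ->]] | ].
  by rewrite IH => /andP[/eqP -> ->]; rewrite eqxx bs.
by move=> /andP[/eqP sw /andP[aS wS]]; exists (a, w); rewrite /= IH sw eqxx.
Qed.

Lemma uniq_all_words (s : seq nat) p : uniq s -> uniq (all_words s p).
Proof.
move=> us; elim: p => [|p IH] //=.
by apply: allpairs_uniq => // [[a w] [b v]] _ _ /= [-> ->].
Qed.

Lemma mem_candidates u w :
  (w \in candidates u) = (size w <= size u) && all (mem u) w.
Proof.
apply/flattenP/andP => [[ws /mapP[p] + ->] | [le_wu wu]].
  rewrite mem_iota mem_all_words => lt_pu /andP[/eqP sw].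
  by rewrite sw (eq_all (mem_undup u)); split => //; lia.
exists (all_words (undup u) (size w)); last first.
  by rewrite mem_all_words eqxx (eq_all (mem_undup u)).
by apply/map_f; rewrite mem_iota; lia.
Qed.

Lemma uniq_candidates u : uniq (candidates u).
Proof.
rewrite /candidates; elim: (iota _ _) (iota_uniq 0 (size u).+1) => //= p ps IH.
move=> /andP[p_ps ups]; rewrite cat_uniq uniq_all_words ?undup_uniq ?IH //= andbT.
apply/hasPn => w /flattenP[_ /mapP[q qps ->]].
rewrite !mem_all_words => /andP[/eqP -> _]; case: eqP => // qp.
by rewrite -qp qps in p_ps.
Qed.

Lemma up_word_nil w : up_word [::] w = w.
Proof. by rewrite /up_word subn0 take_size drop_size /= cats0. Qed.

Lemma up_word_rcons r rs w a : size rs <= size w ->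
  up_word (r :: rs) (rcons w a) = up_word rs w ++ nseq r.+1 a.
Proof.
move=> le_rs_w; rewrite /up_word size_rcons /= subSS.
have -> : take (size w - size rs) (rcons w a) = take (size w - size rs) w.
  by rewrite -cats1 takel_cat // leq_subr.
have -> : drop (size w - size rs) (rcons w a) =
          rcons (drop (size w - size rs) w) a.
  rewrite -!cats1 drop_cat; case: ltnP => // ge_d_w.
  have -> : size w - size rs = size w by lia.
  by rewrite drop_size subnn.
rewrite rev_cons zip_rcons ?size_drop ?size_rev; last by lia.
by rewrite map_rcons flatten_rcons catA.
Qed.

Lemma size_up_word rs w : size rs <= size w ->
  size (up_word rs w) = size w + sumn rs.
Proof.
elim: rs w => [|r rs IH] w; first by rewrite up_word_nil addn0.
case/lastP: w => [|w a] //; rewrite size_rcons ltnS => le_rs_w.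
by rewrite up_word_rcons // size_cat IH // size_nseq /=; lia.
Qed.

Section InducePullback.

Variables (n p : nat) (f : nat -> nat) (rs : seq nat).
Hypothesis f_range : forall j, 0 < j <= n -> 0 < f j <= p.
Hypothesis f_onto : forall i, 0 < i <= p -> exists2 j, 0 < j <= n & f j = i.
Hypothesis size_rs : size rs <= p.
Hypothesis up_wordE : forall w, size w = p -> up_word rs w = pullback f n w.

(* The only summand that can be nonzero is the unique pullback preimage of u,
   which exists iff u is constant on the fibres of f. *)
Lemma induce_Sgen_frename F G u : on_elems n F ->
  (forall v, size v = n -> feval (word_val v) G <-> const_on_fibres f n v) ->
  induce rs (Sgen p (frename f F)) u = Sgen n (FAnd F G) u.
Proof.
move=> Fn G_fibres; rewrite /induce -big_filter.
set ws := filter _ (candidates u).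
have ws_pullback w : w \in ws -> size w = p -> pullback f n w = u.
  by move=> + sw; rewrite mem_filter -up_wordE // => /andP[/andP[_ /eqP]].
rewrite (eq_big_seq (fun w => if size w == p then Sgen n (FAnd F G) u else 0%R)).
  have [uFG | nuFG] := boolP ((size u == n) && all (fun a => 0 < a) u &&
                              feval (word_val u) (FAnd F G)); last first.
    have -> : Sgen n (FAnd F G) u = 0%R by rewrite SgenE (negbTE nuFG).
    by rewrite big1 // => w _; case: ifP.
  move: (uFG) => /andP[/andP[/eqP su _] /andP[_ Gu]].
  have [w0 sw0 w0u] := pullback_onto f_range f_onto su ((G_fibres u su).1 Gu).
  have up_w0 : up_word rs w0 = u by rewrite up_wordE.
  have w0_ws : w0 \in ws.
    rewrite mem_filter up_w0 eqxx sw0 size_rs mem_candidates /=.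
    rewrite -{1}up_w0 size_up_word ?sw0 // leq_addr /=.
    by apply/allP => a; rewrite -w0u; apply: (mem_pullback f_onto sw0).
  rewrite (bigD1_seq w0) ?filter_uniq ?uniq_candidates //= big1_seq.
    by rewrite sw0 eqxx addr0 SgenE uFG.
  move=> w /andP[w_w0 w_ws]; case: eqP => // sw; case/eqP: w_w0.
  by apply: (pullback_inj f_onto sw sw0); rewrite w0u ws_pullback.
move=> w w_ws; case: eqP => [sw | /eqP nsw]; last by rewrite SgenE (negbTE nsw).
rewrite (Sgen_frename f_range f_onto Fn sw) ws_pullback // !SgenE /=.
have su : size u = n by rewrite -(ws_pullback w) ?size_pullback.
have /(G_fibres u su).2 -> : const_on_fibres f n u.
  by rewrite -(ws_pullback w w_ws sw); apply: pullback_const_on_fibres.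
by rewrite andbT.
Qed.

End InducePullback.

(** * Descending blocks and the contraction map *)

Record descending_blocks (m N : nat) (Os : seq (seq nat)) : Prop := {
  block_uniq : forall O, O \in Os -> uniq O;
  block_nonempty : forall O, O \in Os -> O != [::];
  blocks_cover : forall j, has (fun O => j \in O) Os = (m <= j < m + N);
  blocks_descending : forall a b, a < b < size Os ->
    forall x y, x \in nth [::] Os a -> y \in nth [::] Os b -> y < x }.

Lemma descending_blocks_cons m N O Os : descending_blocks m N (O :: Os) ->
  exists2 t, m <= t < m + N &
    [/\ O =i [pred j | t <= j < m + N], size O = m + N - t
      & descending_blocks m (t - m) Os].
Proof.
case=> uniqB nonemptyB coverB descB.
have exO : exists j, j \in O.
  move: (nonemptyB O (mem_head _ _)); case: (O) => // j O' _.
  by exists j; rewrite mem_head.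
case: (ex_minnP exO) => t tO t_min.
have O_range j : j \in O -> m <= j < m + N by move=> jO; rewrite -coverB /= jO.
have below_t j : has (fun O => j \in O) Os -> j < t.
  case/hasP=> O' O'_Os jO'; apply: (descB 0 (index O' Os).+1) => //=.
    by rewrite ltnS index_mem.
  by rewrite nth_index.
have OE j : (j \in O) = (t <= j < m + N).
  apply/idP/andP => [jO | [tj jN]].
    by rewrite t_min //; case/andP: (O_range j jO).
  have : has (fun O => j \in O) (O :: Os).
    by rewrite coverB jN andbT; case/andP: (O_range t tO) => /leq_trans->.
  by case/orP => // /below_t; lia.
have /andP[mt tN] := O_range t tO.
exists t; first by rewrite mt tN.
split => //.
- have /perm_size -> : perm_eq O (iota t (m + N - t)).
    apply: uniq_perm; rewrite ?iota_uniq ?uniqB ?mem_head // => j.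
    by rewrite OE mem_iota; lia.
  by rewrite size_iota.
- split => [O' O'_Os | O' O'_Os | j | a b ab].
  + by apply: uniqB; rewrite inE O'_Os orbT.
  + by apply: nonemptyB; rewrite inE O'_Os orbT.
  + apply/idP/idP => [jOs | jt].
      have := below_t j jOs; have : has (fun O => j \in O) (O :: Os).
        by rewrite /= jOs orbT.
      by rewrite coverB; lia.
    have : has (fun O => j \in O) (O :: Os) by rewrite coverB; lia.
    by rewrite /= OE; case/orP => //; lia.
  + exact: (descB a.+1 b.+1).
Qed.

Lemma sumn_size_blocks m N Os : descending_blocks m N Os ->
  sumn (map size Os) = N.
Proof.
elim: Os N => [|O Os IH] N B.
  by case: N B => // N /blocks_cover/(_ m); rewrite /= leqnn addnS ltnS leq_addr.
have [t tN [_ sO /IH sOs]] := descending_blocks_cons B.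
by rewrite /= sO sOs; lia.
Qed.

Lemma sumn_rvec (Os : seq (seq nat)) : (forall O, O \in Os -> O != [::]) ->
  sumn (rvec Os) + size Os = sumn (map size Os).
Proof.
elim: Os => //= O Os IH nonempty.
rewrite -IH => [|O' O'_Os]; last by apply: nonempty; rewrite inE O'_Os orbT.
by move: (nonempty O (mem_head _ _)); case: (O) => //= a O' _; lia.
Qed.

Lemma psi_small m Os j : j < m -> psi m Os j = j.
Proof. by rewrite /psi => ->. Qed.

Lemma psi_cons m O Os j : j \notin O -> psi m (O :: Os) j = psi m Os j.
Proof. by move=> jO; rewrite /psi /= (negbTE jO); case: ifP => //; lia. Qed.

Section Blocks.

Variables (m N : nat) (Os : seq (seq nat)).
Hypothesis B : descending_blocks m N Os.

Lemma exists_block j : m <= j < m + N -> exists2 i, i < size Os & j \in nth [::] Os i.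
Proof.
rewrite -(blocks_cover B) => /hasP[O O_Os jO].
by exists (index O Os); rewrite ?index_mem ?nth_index.
Qed.

Lemma block_range i j : i < size Os -> j \in nth [::] Os i -> m <= j < m + N.
Proof.
move=> i_Os jOi; rewrite -(blocks_cover B).
by apply/hasP; exists (nth [::] Os i); rewrite ?mem_nth.
Qed.

Lemma find_block i j : i < size Os -> j \in nth [::] Os i ->
  find (fun O => j \in O) Os = i.
Proof.
move=> i_Os jOi; apply/eqP; rewrite eqn_leq leqNgt.
apply/andP; split; first by apply/negP => /(before_find [::]); rewrite jOi.
rewrite leqNgt; apply/negP => lt_find_i.
have has_j : has (fun O => j \in O) Os.
  by rewrite (blocks_cover B) (block_range i_Os jOi).
have find_i : find (fun O => j \in O) Os < i < size Os by rewrite lt_find_i.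
by have := blocks_descending B find_i (nth_find [::] has_j) jOi; rewrite ltnn.
Qed.

Lemma psi_block i j : m <= j -> i < size Os -> j \in nth [::] Os i ->
  psi m Os j = m + size Os - i.+1.
Proof. by move=> mj i_Os jOi; rewrite /psi ltnNge mj /= (find_block i_Os jOi). Qed.

Lemma psi_large j : m <= j < m + N -> m <= psi m Os j < m + size Os.
Proof.
by move=> /[dup] /andP[mj _] /exists_block[i i_Os /(psi_block mj i_Os) ->]; lia.
Qed.

Lemma psi_onto i : 0 < m -> 0 < i <= m.-1 + size Os ->
  exists2 j, 0 < j < m + N & psi m Os j = i.
Proof.
move=> m_gt0 i_range; case: (ltnP i m) => [im | mi].
  by exists i; [lia | rewrite psi_small].
have b_Os : m.-1 + size Os - i < size Os by lia.
have := block_nonempty B (mem_nth [::] b_Os).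
case Eb: (nth [::] Os _) => [|j O] // _.
have jb : j \in nth [::] Os (m.-1 + size Os - i) by rewrite Eb mem_head.
have j_range := block_range b_Os jb.
by exists j; [lia | rewrite (psi_block _ b_Os jb); lia].
Qed.

End Blocks.

(* The j-th letter from the end is repeated r_j + 1 = |O_j| times, once for
   each element of the block O_j, all of which [psi] sends to that letter. *)
Lemma up_word_psi m N Os w : 0 < m -> descending_blocks m N Os ->
  size w = m.-1 + size Os ->
  up_word (rvec Os) w = pullback (psi m Os) (m.-1 + N) w.
Proof.
move=> m_gt0; elim: Os N w => [|O Os IH] N w B.
  rewrite -(sumn_size_blocks B) addn0 up_word_nil => sw.
  apply: (eq_from_word_val sw (size_pullback _ _ _)) => j jm.
  by rewrite word_val_pullback // psi_small //; lia.
have [t tN [OE sO B']] := descending_blocks_cons B.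
case/lastP: w => [|w a]; rewrite ?size_rcons /=; first lia.
move=> /eqP; rewrite addnS eqSS => /eqP sw.
rewrite up_word_rcons ?size_map ?sw ?leq_addl // (IH _ _ B') //.
have -> : m.-1 + N = m.-1 + (t - m) + size O by lia.
rewrite /pullback [in RHS]iotaD map_cat; congr (_ ++ _).
  apply/eq_in_map => j; rewrite mem_iota => j_range.
  rewrite psi_cons; last by rewrite OE inE; lia.
  rewrite word_val_rcons // sw.
  case: (ltnP j m) => [jm | mj]; first by rewrite psi_small; lia.
  have /(psi_large B') : m <= j < m + (t - m) by lia.
  lia.
have /all_pred1P -> : all (pred1 a) [seq word_val (rcons w a) (psi m (O :: Os) j)
                                   | j <- iota (1 + (m.-1 + (t - m))) (size O)].
  apply/allP => x /mapP[j]; rewrite mem_iota => j_range ->.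
  have jO : j \in nth [::] (O :: Os) 0 by rewrite /= OE inE; lia.
  rewrite (psi_block B _ _ jO) //=; last lia.
  have -> : m + (size Os).+1 - 1 = (size w).+1 by rewrite sw; lia.
  by rewrite word_val_rcons_last.
by rewrite size_map size_iota prednK // sO; lia.
Qed.

(** * Contractible clauses *)

Lemma simC_sym I a b : simC I a b -> simC I b a.
Proof. by case=> aV [bV ab]; do !split => //; apply: rst_sym. Qed.

Lemma simC_trans I a b c : simC I a b -> simC I b c -> simC I a c.
Proof. by case=> aV [_ ab] [_ [cV bc]]; do !split => //; apply: rst_trans ab bc. Qed.

Lemma class_memE I Os O a : ordered_class_decomp I Os -> O \in Os -> a \in O ->
  forall b, b \in O <-> simC I a b.
Proof.
case=> classes _ O_Os aO b; have [_ [x [_ xO]]] := classes O O_Os.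
have xa := (xO a).1 aO.
split => [/xO xb | ab]; first exact: simC_trans (simC_sym xa) xb.
by apply/xO; apply: simC_trans xa ab.
Qed.

Lemma mem_VC I e : e \in I -> e.1 \in VC I /\ e.2 \in VC I.
Proof.
move=> eI; rewrite /VC !mem_undup; split; apply/flattenP; exists [:: e.1; e.2];
  rewrite ?inE ?eqxx ?orbT //; exact: map_f.
Qed.

Lemma decomp_descending_blocks I m n Os :
  VC_interval I m n -> ordered_class_decomp I Os ->
  descending_blocks m (n - m.-1) Os.
Proof.
case=> /andP[m_gt0 _] VCE [classes [cover [inVC desc]]].
split => // [O /classes[] // | O /classes[_ [x [xO _]]] | j].
  by apply/eqP => O0; rewrite O0 in xO.
apply/hasP/idP => [[O O_Os /(inVC O O_Os)] | j_range]; first by rewrite VCE; lia.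
by have [|O] := cover j; [rewrite VCE; lia | exists O].
Qed.

Section ContractibleClause.

Variables (I : seq (nat * nat)) (m n : nat) (Os : seq (seq nat)).
Hypothesis VCI : VC_interval I m n.
Hypothesis decI : ordered_class_decomp I Os.

Let m_gt0 : 0 < m. Proof. by case: VCI => /andP[]. Qed.

Let B : descending_blocks m (n - m.-1) Os := decomp_descending_blocks VCI decI.

Let edge_range a b : (a, b) \in I -> m <= a <= n /\ m <= b <= n.
Proof. by case: VCI => _ VCE /mem_VC[]; rewrite /= !VCE. Qed.

Lemma psi_range j : 0 < j <= n -> 0 < psi m Os j <= m.-1 + size Os.
Proof.
move=> j_n; case: (ltnP j m) => [jm | mj]; first by rewrite psi_small; lia.
have /(psi_large B) : m <= j < m + (n - m.-1) by lia.
lia.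
Qed.

Lemma psi_edge a b : (a, b) \in I -> psi m Os a = psi m Os b.
Proof.
move=> ab; have [aV bV] := mem_VC ab; have [a_n b_n] := edge_range ab.
have /(exists_block B)[i i_Os aOi] : m <= a < m + (n - m.-1) by lia.
have bOi : b \in nth [::] Os i.
  apply/(class_memE decI (mem_nth [::] i_Os) aOi b).
  by do !split => //; apply: rst_step.
by rewrite (psi_block B _ i_Os aOi) ?(psi_block B _ i_Os bOi) //; lia.
Qed.

Lemma psi_fibre a b : 0 < a <= n -> 0 < b <= n ->
  psi m Os a = psi m Os b -> a = b \/ simC I a b.
Proof.
move=> a_n b_n.
case: (ltnP a m) => [am | ma]; case: (ltnP b m) => [bm | mb].
- by rewrite !psi_small //; left.
- have /(psi_large B) : m <= b < m + (n - m.-1) by lia.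
  by rewrite (psi_small _ am) => ? ?; exfalso; lia.
- have /(psi_large B) : m <= a < m + (n - m.-1) by lia.
  by rewrite (psi_small _ bm) => ? ?; exfalso; lia.
have /(exists_block B)[i i_Os aOi] : m <= a < m + (n - m.-1) by lia.
have /(exists_block B)[i' i'_Os bOi'] : m <= b < m + (n - m.-1) by lia.
rewrite (psi_block B ma i_Os aOi) (psi_block B mb i'_Os bOi') => eq_i.
have ii' : i' = i by lia.
by rewrite ii' in bOi'; right; apply/(class_memE decI (mem_nth [::] i_Os) aOi b).
Qed.

(* The fibres of [psi] are the ~_C classes and the singletons below m. *)
Lemma edge_clause_const_on_fibres u : size u = n ->
  ~~ feval (word_val u) (edge_clause I) <-> const_on_fibres (psi m Os) n u.
Proof.
move=> su; rewrite feval_edge_clause; split => [/hasPn edge_eq | cu].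
  have sim_eq a b : clos_refl_sym_trans nat (fun a b => (a, b) \in I) a b ->
      word_val u a = word_val u b.
    elim=> [x y /edge_eq | x | x y _ -> | x y z _ -> _ ->] //.
    by rewrite negbK => /eqP.
  by move=> a b a_n b_n /(psi_fibre a_n b_n)[-> | [_ [_ /sim_eq]]].
apply/hasPn => -[a b] ab /=; rewrite negbK; apply/eqP.
have [a_n b_n] := edge_range ab.
by apply: cu (psi_edge ab); lia.
Qed.

End ContractibleClause.

Theorem theorem3p8 (n m : nat) (S' : formula) (I : seq (nat * nat))
    (Os : seq (seq nat)) :
  on_elems n S' ->
  VC_interval I m n ->
  ordered_class_decomp I Os ->
  let rs := rvec Os in
  forall u : seq nat,
    Sgen n (FAnd S' (edge_clause I)) u =
    (Sgen n S' u -
     induce rs (Sgen (n - sumn rs) (contraction S' m Os)) u)%R.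
Proof.
move=> S'n VCI decI rs u.
have [/andP[m_gt0 m_n] _] := VCI.
have B := decomp_descending_blocks VCI decI.
have -> : n - sumn rs = m.-1 + size Os.
  by have := sumn_rvec (block_nonempty B); rewrite (sumn_size_blocks B) -/rs; lia.
rewrite Sgen_split; congr (_ - _)%R; apply/esym.
apply: (induce_Sgen_frename (G := FNeg (edge_clause I)) _ _ _ _ u S'n
         (edge_clause_const_on_fibres VCI decI)).
- exact: psi_range VCI decI.
- by move=> i /(psi_onto B m_gt0)[j j_n <-]; exists j => //; lia.
- by rewrite size_map leq_addl.
- by move=> w sw; rewrite (up_word_psi m_gt0 B sw); congr pullback; lia.
Qed.
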